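(* Let $\mathcal W$ be a monotonic game on $[n]$ and $i\neq j$ players. Then the game $\hat{\mathcal W}$ obtained by imposing an asymmetric reciprocal strong YES-quarrel between $i$ and $j$ is quasi-monotonic (i.e. 1-monotonic).
   Context: Players are $[n]=\{1,\dots,n\}$. A binary voting game on $[n]$ is identified with its collection $\mathcal W\subseteq 2^{[n]}$ of winning sets ($S\in\mathcal W$ means the division in which exactly the members of $S$ vote YES has outcome YES). It is monotonic if $T\subseteq S$ and $T\in\mathcal W$ imply $S\in\mathcal W$. For an integer $k\ge0$, a game $\mathcal W$ is $k$-monotonic if for every $S\subseteq[n]$ with $S\notin\mathcal W$ and every proper subset $T\subsetneq S$ there exists $K$ with $|K|\le k$ such that $T\setminus K\notin\mathcal W$; quasi-monotonic means 1-monotonic. Asymmetric reciprocal strong YES-quarrel between $i$ and $j$: for every $S\subseteq[n]\setminus\{i,j\}$, $S\cup\{i,j\}\in\hat{\mathcal W}\iff S\in\mathcal W$; $S\cup\{i\}\in\hat{\mathcal W}\iff S\cup\{i\}\in\mathcal W$; $S\cup\{j\}\in\hat{\mathcal W}\iff S\cup\{j\}\in\mathcal W$; $S\in\hat{\mathcal W}\iff S\in\mathcal W$. *)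

(* Players [n] are represented by 'I_n (0-indexed). *)
From mathcomp Require Import all_boot.
Set Implicit Arguments. Unset Strict Implicit. Unset Printing Implicit Defensive.

(* A binary voting game on [n]: its collection of winning sets. *)
Definition game (n : nat) := {set {set 'I_n}}.

Definition monotonic n (W : game n) : Prop :=
  forall S T : {set 'I_n}, T \subset S -> T \in W -> S \in W.

Definition k_monotonic n (k : nat) (W : game n) : Prop :=
  forall S : {set 'I_n}, S \notin W ->
  forall T : {set 'I_n}, T \proper S ->
  exists K : {set 'I_n}, #|K| <= k /\ (T :\: K) \notin W.

Definition quasi_monotonic n (W : game n) : Prop := k_monotonic 1 W.

Definition asym_recip_strong_yes_quarrel n (W Wh : game n) (i j : 'I_n) : Prop :=
  forall S : {set 'I_n}, i \notin S -> j \notin S ->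
    [/\ (i |: (j |: S) \in Wh) = (S \in W),
        (i |: S \in Wh) = (i |: S \in W),
        (j |: S \in Wh) = (j |: S \in W) &
        (S \in Wh) = (S \in W)].

(* The quarrel only affects coalitions containing both i and j, and such a
   coalition wins in the new game iff it wins in W once i and j are removed.
   Hence X wins in the new game iff its "pair core" wins in W, where the core
   drops i and j from X when both are present and leaves X alone otherwise.
   For a losing S and T strictly inside S: if T contains both quarrelers, the
   core of T lies in the core of S; otherwise remove from T the one quarreler
   it may contain, which leaves T minus {i, j}, its own core, again inside the
   core of S.  Monotonicity of W then makes the result losing. *)

From mathcomp Require Import all_boot.

Set Implicit Arguments.
Unset Strict Implicit.
Unset Printing Implicit Defensive.

Section SetDPair.

Variables (T : finType) (a b : T).

Lemma setD_pair_id (X : {set T}) :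
  a \notin X -> b \notin X -> X :\: [set a; b] = X.
Proof.
move=> aX bX; apply/setDidPl; rewrite disjoints_subset; apply/subsetP=> x xX.
by rewrite !inE; apply/norP; split; [apply: contraNneq aX | apply: contraNneq bX] => <-.
Qed.

Lemma setD_pair_setD1 (X : {set T}) : b \notin X -> X :\: [set a; b] = X :\ a.
Proof.
move=> bX; rewrite -setDDl; apply/setDidPl.
by rewrite disjoint_sym disjoints1 !inE negb_and bX orbT.
Qed.

Lemma setD_pairC (X : {set T}) : X :\: [set a; b] = X :\: [set b; a].
Proof. by rewrite [[set b; a]]setUC. Qed.

End SetDPair.

Lemma setD1_pair (T : finType) (a b : T) (X : {set T}) :
  ~~ ((a \in X) && (b \in X)) ->
  X :\ (if a \in X then a else b) = X :\: [set a; b].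
Proof.
case aX: (a \in X) => /= bX; first by rewrite setD_pair_setD1.
by rewrite setD_pairC setD_pair_setD1 ?aX.
Qed.

Section PairCore.

Variables (T : finType) (a b : T).

Definition pair_core (X : {set T}) : {set T} :=
  if (a \in X) && (b \in X) then X :\: [set a; b] else X.

Lemma setD_pair_sub_core (X : {set T}) : X :\: [set a; b] \subset pair_core X.
Proof. by rewrite /pair_core; case: ifP => _; rewrite ?subsetDl. Qed.

Lemma pair_core_setD (X : {set T}) :
  pair_core (X :\: [set a; b]) = X :\: [set a; b].
Proof. by rewrite /pair_core !inE eqxx. Qed.

Lemma pair_core_subset (S X : {set T}) :
  X \subset S -> (a \in X) && (b \in X) -> pair_core X \subset pair_core S.
Proof.
move=> XS abX; rewrite /pair_core abX; case/andP: abX => aX bX.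
by rewrite (subsetP XS _ aX) (subsetP XS _ bX) setSD.
Qed.

End PairCore.

Lemma quarrel_winE (n : nat) (W Wh : game n) (i j : 'I_n) (X : {set 'I_n}) :
  i != j -> asym_recip_strong_yes_quarrel W Wh i j ->
  (X \in Wh) = (pair_core i j X \in W).
Proof.
move=> ij quarrel; rewrite /pair_core.
have iD : i \notin X :\: [set i; j] by rewrite !inE eqxx.
have jD : j \notin X :\: [set i; j] by rewrite !inE eqxx orbT.
have [both_in only_i only_j none_in] := quarrel _ iD jD.
case iX: (i \in X); case jX: (j \in X) => /=.
- have XE : i |: (j |: X :\: [set i; j]) = X.
    by rewrite -setDDl !setD1K // !inE jX andbT eq_sym.
  by rewrite -{1}XE both_in.
- have XE : i |: X :\: [set i; j] = X by rewrite setD_pair_setD1 ?jX // setD1K.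
  by rewrite -XE only_i.
- have XE : j |: X :\: [set i; j] = X.
    by rewrite setD_pairC setD_pair_setD1 ?iX // setD1K.
  by rewrite -XE only_j.
- by rewrite -{1 2}(setD_pair_id (negbT iX) (negbT jX)).
Qed.

Theorem theorem7 (n : nat) (W Wh : game n) (i j : 'I_n) :
  monotonic W -> i != j ->
  asym_recip_strong_yes_quarrel W Wh i j ->
  quasi_monotonic Wh.
Proof.
move=> monoW ij quarrel S; rewrite (quarrel_winE _ ij quarrel) => S_lose T.
move=> /properP [TS _].
have lose_sub (A : {set 'I_n}) : A \subset pair_core i j S -> A \notin W.
  by move=> AS; apply: contra S_lose; exact: monoW.
case: (boolP ((i \in T) && (j \in T))) => ijT.
- exists set0; rewrite cards0 setD0 (quarrel_winE _ ij quarrel); split=> //.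
  by apply: lose_sub; exact: pair_core_subset.
- exists [set if i \in T then i else j].
  rewrite cards1 setD1_pair // (quarrel_winE _ ij quarrel) pair_core_setD.
  split=> //; apply: lose_sub.
  exact: subset_trans (setSD _ TS) (setD_pair_sub_core _ _ _).
Qed.
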